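(* Let $\Gamma$ be a splice diagram satisfying the edge determinant condition. Then $d_u\,d_v\geq \ell_{u,v}^2$ for all nodes $u,v$ of $\Gamma$, with equality if and only if $u=v$.
   Context: A splice diagram is a finite tree $\Gamma$ with at least one vertex of valency $\geq3$ and no vertex of valency $2$; vertices of valency $1$ are leaves, the others nodes. For each node $v$ and edge $e$ adjacent to $v$ a positive integer weight $d_{v,e}$ is given; $d_{v,u}:=d_{v,e}$ for $e$ the edge at $v$ on the geodesic $[v,u]$. The total weight of a node is $d_v=\prod_{e\ni v}d_{v,e}$. For distinct vertices $u,v$, $\ell_{u,v}$ is the product of all weights $d_{w,e}$ with $w$ a node on $[u,v]$ and $e$ an edge at $w$ not contained in $[u,v]$; $\ell_{v,v}:=d_v$. Edge determinant condition: $d_{u,v}d_{v,u}>\ell_{u,v}$ for each edge $[u,v]$ between two nodes. *)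

From mathcomp Require Import all_boot.
Set Implicit Arguments. Unset Strict Implicit. Unset Printing Implicit Defensive.

Section Splice.
Variables (V : finType) (adj : rel V) (d : V -> V -> nat).

Definition valency (v : V) : nat := #|[pred x | adj v x]|.
Definition leaf (v : V) : bool := valency v == 1.
Definition node (v : V) : bool := valency v != 1.

(* p is the vertex list (after u) of a simple path from u to v *)
Definition upath (u v : V) (p : seq V) : bool :=
  [&& path adj u p, last u p == v & uniq (u :: p)].

Definition is_tree : Prop :=
  [/\ symmetric adj, irreflexive adj &
      forall u v : V, exists! p : seq V, upath u v p].

(* splice diagram structure (weights d w x for node w, x adjacent to w) *)
Definition splice_diagram : Prop :=
  [/\ is_tree,
      exists v : V, 3 <= valency v,
      forall v : V, valency v != 2 &
      forall w x : V, node w -> adj w x -> 0 < d w x].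

Definition dtot (v : V) : nat := \prod_(x : V | adj v x) d v x.

Definition edge_in (s : seq V) (w x : V) : bool :=
  ((w, x) \in zip s (behead s)) || ((x, w) \in zip s (behead s)).

(* l for the path with vertex list s: product of weights d w x, w a node
   on s, edge {w,x} at w not contained in s.  For s = [:: v] this is d_v. *)
Definition ell_path (s : seq V) : nat :=
  \prod_(w <- s | node w) \prod_(x : V | adj w x && ~~ edge_in s w x) d w x.

(* l_{u,v}, computed along the geodesic [u,v] = u :: p *)
Definition ell (u v : V) (p : seq V) : nat := ell_path (u :: p).

(* edge determinant condition: for each edge [u,v] between two nodes,
   d_{u,v} d_{v,u} > l_{u,v} (the geodesic from u to v is [:: v]) *)
Definition edge_det_cond : Prop :=
  forall u v : V, node u -> node v -> adj u v ->
    ell u v [:: v] < d u v * d v u.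

End Splice.

From mathcomp Require Import all_boot zify.
Set Implicit Arguments. Unset Strict Implicit. Unset Printing Implicit Defensive.

(* Along the geodesic s = [w_0 = u, ..., w_k = v], whose inner vertices are
   nodes since they have two neighbours, the total weights split as
   d_{w_0} ... d_{w_k} = l_{u,v} * D, where D is the product of the edge
   determinants d_{a,b} d_{b,a} over the edges of s.  Squaring and regrouping
   the left-hand side by edges gives l_{u,v}^2 D^2 = d_u d_v * prod_{[a,b] in s}
   d_a d_b.  Each edge [a,b] of s, seen as a path of its own, gives
   d_a d_b = l_{a,b} d_{a,b} d_{b,a}, which the edge determinant condition makes
   smaller than (d_{a,b} d_{b,a})^2; so the last product is < D^2 as soon as s
   has an edge, whence l_{u,v}^2 < d_u d_v. *)

Definition pairs (T : Type) (s : seq T) : seq (T * T) := zip s (behead s).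

Lemma pairs_cons2 (T : Type) (a b : T) (t : seq T) :
  pairs [:: a, b & t] = (a, b) :: pairs (b :: t).
Proof. by []. Qed.

Lemma mem_pairs (T : eqType) (s : seq T) (a b : T) :
  (a, b) \in pairs s -> (a \in s) && (b \in s).
Proof.
elim: s => [|x [|y s] IH] //; rewrite pairs_cons2 in_cons => /orP [/eqP [-> ->]|].
  by rewrite !in_cons !eqxx orbT.
by move/IH => /andP [a_in b_in]; rewrite !(in_cons x) a_in b_in !orbT.
Qed.

Lemma pairs_path (T : eqType) (r : rel T) (x : T) (p : seq T) :
  path r x p -> {in pairs (x :: p), forall e, r e.1 e.2}.
Proof.
elim: p x => [|y p IH] x //= /andP [xy yp] e.
by rewrite in_cons => /orP [/eqP -> //|]; apply: IH.
Qed.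

Lemma ltn_prod_seq (I : eqType) (r : seq I) (E1 E2 : I -> nat) :
  r != [::] -> {in r, forall i, 0 < E1 i < E2 i} ->
  \prod_(i <- r) E1 i < \prod_(i <- r) E2 i.
Proof.
case: r => // i r _ ltE; rewrite !big_cons.
have /andP [_ ltEi] := ltE i (mem_head i r).
have ltEr j : j \in r -> 0 < E1 j < E2 j by move=> jr; apply/ltE/mem_behead.
have gt0E1r : 0 < \prod_(j <- r) E1 j.
  by rewrite big_seq prodn_cond_gt0 // => j /ltEr /andP [].
have leEr : \prod_(j <- r) E1 j <= \prod_(j <- r) E2 j.
  by rewrite !big_seq leq_prod // => j /ltEr /andP [_ /ltnW].
by apply: (@leq_trans (E2 i * \prod_(j <- r) E1 j)); rewrite ?ltn_pmul2r ?leq_mul.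
Qed.

(* Each inner vertex of x :: t lies in two of the pairs, each end in one. *)
Lemma prod_pairs_ends (T : Type) (f : T -> nat) (x : T) (t : seq T) :
  \prod_(e <- pairs (x :: t)) (f e.1 * f e.2) * (f x * f (last x t))
  = (\prod_(w <- x :: t) f w) ^ 2.
Proof.
elim: t x => [|y t IH] x; first by rewrite big_nil big_seq1 mul1n mulnn.
rewrite pairs_cons2 big_cons [in RHS]big_cons /=.
have := IH y; move: (\prod_(e <- _) _) (\prod_(w <- _ :: _) _) => E P.
by rewrite -!mulnn => IHy; rewrite [RHS]mulnACA -IHy; lia.
Qed.

Section SpliceDiagram.

Variables (V : finType) (adj : rel V) (d : V -> V -> nat).
Hypotheses (adj_sym : symmetric adj) (adj_irr : irreflexive adj).
Hypothesis d_gt0 : forall w x : V, node adj w -> adj w x -> 0 < d w x.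

Definition edge_det (e : V * V) : nat := d e.1 e.2 * d e.2 e.1.

Definition on_path_weight (s : seq V) : nat :=
  \prod_(w <- s) \prod_(x | adj w x && edge_in s w x) d w x.

Lemma edge_in_cons2 (a b w x : V) (t : seq V) :
  edge_in [:: a, b & t] w x =
  [|| (w == a) && (x == b), (w == b) && (x == a) | edge_in (b :: t) w x].
Proof.
rewrite /edge_in /= !in_cons !xpair_eqE.
by case: (w == a); case: (x == b); case: (w == b); case: (x == a);
   case: (_ \in _); case: (_ \in _).
Qed.

Lemma edge_inC (s : seq V) (w x : V) : edge_in s w x = edge_in s x w.
Proof. exact: orbC. Qed.

Lemma edge_in_notin (s : seq V) (w x : V) : w \notin s -> edge_in s w x = false.
Proof. by apply: contraNF; case/orP => /mem_pairs /andP []. Qed.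

Lemma on_path_weight_cons2 (a b : V) (t : seq V) :
  uniq [:: a, b & t] -> adj a b ->
  on_path_weight [:: a, b & t] = edge_det (a, b) * on_path_weight (b :: t).
Proof.
rewrite /= => /andP [a_notin /andP [b_notin _]] ab.
have a_neq_b : (a == b) = false by apply: contraNF a_notin => /eqP ->; apply: mem_head.
have a_off x : edge_in (b :: t) a x = false by rewrite edge_in_notin.
(* The new edge [a,b] is the only one at a, adds d_{b,a} at b, and no
   vertex of t sees it. *)
rewrite /on_path_weight big_cons (big_pred1 b) => [|x]; last first.
  by rewrite edge_in_cons2 a_off eqxx a_neq_b /= orbF andb_idl // => /eqP ->.
rewrite big_cons (bigD1 a) /=; last by rewrite adj_sym ab edge_in_cons2 !eqxx orbT.
rewrite (eq_bigl (fun x => adj b x && edge_in (b :: t) b x)) => [|x]; last first.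
  rewrite edge_in_cons2 eqxx eq_sym a_neq_b; case: (eqVneq x a) => [->|] /=.
    by rewrite edge_inC a_off !andbF.
  by rewrite andbT.
rewrite [in RHS]big_cons /edge_det /= !mulnA; congr (_ * _).
apply: eq_big_seq => w wt; apply: eq_bigl => x.
have wa : (w == a) = false by apply: contraNF a_notin => /eqP <-; rewrite in_cons wt orbT.
have wb : (w == b) = false by apply: contraNF b_notin => /eqP <-.
by rewrite edge_in_cons2 wa wb.
Qed.

Lemma on_path_weightE (u : V) (p : seq V) :
  path adj u p -> uniq (u :: p) ->
  on_path_weight (u :: p) = \prod_(e <- pairs (u :: p)) edge_det e.
Proof.
elim: p u => [|y p IH] u.
  by rewrite /on_path_weight big_seq1 big_nil big_pred0 // => x; rewrite andbF.
move=> /= /andP [uy yp] uniq_s.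
rewrite on_path_weight_cons2 // pairs_cons2 big_cons IH //.
by case/andP: uniq_s.
Qed.

Lemma prod_dtot_split (s : seq V) :
  all (node adj) s -> \prod_(w <- s) dtot adj d w = ell_path adj d s * on_path_weight s.
Proof.
move=> nodes_s; rewrite /ell_path -[\prod_(w <- s | node adj w) _]big_filter.
rewrite (all_filterP nodes_s) -big_split.
by apply: eq_bigr => w _; rewrite /dtot (bigID (edge_in s w)) /= mulnC.
Qed.

Lemma ell_path1 (v : V) : node adj v -> ell_path adj d [:: v] = dtot adj d v.
Proof.
move=> node_v; rewrite /ell_path big_cons node_v big_nil muln1.
by apply: eq_bigl => x; rewrite andbT.
Qed.

Lemma dtot_gt0 (w : V) : node adj w -> 0 < dtot adj d w.
Proof. by move=> node_w; apply: prodn_cond_gt0 => x; apply: d_gt0. Qed.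

Lemma node_of_two_neighbours (y x z : V) : adj y x -> adj y z -> x != z -> node adj y.
Proof.
move=> yx yz xz; have two : 1 < valency adj y.
  have uniq_xz : uniq [:: x; z] by rewrite /= in_cons orbF xz.
  rewrite -[2]/(size [:: x; z]) -(card_uniqP uniq_xz).
  by apply/subset_leq_card/subsetP => w; rewrite !inE => /orP [] /eqP ->.
by apply: contraTneq two => ->.
Qed.

Lemma prod_dtot_geodesic (u : V) (p : seq V) :
  path adj u p -> uniq (u :: p) -> all (node adj) (u :: p) ->
  \prod_(w <- u :: p) dtot adj d w
  = ell_path adj d (u :: p) * \prod_(e <- pairs (u :: p)) edge_det e.
Proof. by move=> up uniq_s nodes_s; rewrite prod_dtot_split // on_path_weightE. Qed.

Lemma geodesic_nodes (u : V) (p : seq V) :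
  path adj u p -> uniq (u :: p) -> node adj (last u p) -> all (node adj) p.
Proof.
elim: p u => [|y q IH] u //= /andP [uy yq] /andP [u_notin uniq_yq] node_last.
rewrite (IH y) // andbT.
case: q {IH uniq_yq} yq node_last u_notin => [//|z q] /= /andP [yz _] _.
rewrite !in_cons !negb_or => /and3P [_ uz _].
by apply: (node_of_two_neighbours (x := u) (z := z)); rewrite // adj_sym.
Qed.

Hypothesis edge_det_gt_ell : edge_det_cond adj d.

Lemma dtot_mul_lt_edge_det (a b : V) :
  node adj a -> node adj b -> adj a b ->
  dtot adj d a * dtot adj d b < edge_det (a, b) ^ 2.
Proof.
move=> node_a node_b ab.
have ab_neq : a != b by apply: contraTneq ab => ->; rewrite adj_irr.
have := @prod_dtot_geodesic a [:: b].
rewrite /= ab mem_seq1 (negPf ab_neq) node_a node_b !big_cons !big_nil !muln1 => -> //.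
have edge_det_gt0 : 0 < edge_det (a, b) by rewrite muln_gt0 !d_gt0 // adj_sym.
by rewrite -mulnn ltn_pmul2r //; apply: edge_det_gt_ell.
Qed.

Lemma ell_path_sq_lt (u : V) (p : seq V) :
  p != [::] -> path adj u p -> uniq (u :: p) -> all (node adj) (u :: p) ->
  ell_path adj d (u :: p) ^ 2 < dtot adj d u * dtot adj d (last u p).
Proof.
move=> p_nil up uniq_s nodes_s.
set D := \prod_(e <- pairs (u :: p)) edge_det e.
set Pd := \prod_(e <- pairs (u :: p)) (dtot adj d e.1 * dtot adj d e.2).
have lt_Pd : Pd < D ^ 2.
  rewrite -mulnn -big_split; apply: ltn_prod_seq => [|[a b] ab_in].
    by case: p p_nil {up uniq_s nodes_s Pd D}.
  have /andP [/(allP nodes_s) node_a /(allP nodes_s) node_b] := mem_pairs ab_in.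
  rewrite muln_gt0 !dtot_gt0 //= mulnn dtot_mul_lt_edge_det //.
  exact: (pairs_path up ab_in).
have ends_gt0 : 0 < dtot adj d u * dtot adj d (last u p).
  rewrite muln_gt0 !dtot_gt0 //; last by case/andP: nodes_s.
  by apply: (allP nodes_s); rewrite mem_last.
have D2_gt0 : 0 < D ^ 2 := leq_ltn_trans (leq0n Pd) lt_Pd.
rewrite -(ltn_pmul2r D2_gt0) -expnMn -prod_dtot_geodesic // -prod_pairs_ends.
by rewrite mulnC ltn_pmul2l.
Qed.

End SpliceDiagram.

Theorem lemma2p9 (V : finType) (adj : rel V) (d : V -> V -> nat) :
  splice_diagram adj d ->
  edge_det_cond adj d ->
  forall u v : V, node adj u -> node adj v ->
  forall p : seq V, upath adj u v p ->
    ell adj d u v p ^ 2 <= dtot adj d u * dtot adj d v /\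
    (dtot adj d u * dtot adj d v = ell adj d u v p ^ 2 <-> u = v).
Proof.
move=> [[adj_sym adj_irr _] _ _ d_gt0] edge_det_gt_ell u v node_u node_v p.
case/and3P=> up /eqP last_v uniq_s.
have nodes_s : all (node adj) (u :: p).
  by rewrite /= node_u (geodesic_nodes adj_sym up) // last_v.
case: p => [|y q] in up last_v uniq_s nodes_s *.
  by rewrite /= in last_v; subst v; rewrite /ell ell_path1 // mulnn.
have := ell_path_sq_lt adj_sym adj_irr d_gt0 edge_det_gt_ell (p := y :: q) isT
          up uniq_s nodes_s.
rewrite last_v => lt_ell.
have u_neq_v : u != v.
  case/andP: uniq_s => u_notin _.
  by apply: contraNneq u_notin => ->; rewrite -last_v /= mem_last.
split; first exact: ltnW.
split=> [eq_ell|eq_uv]; first by rewrite eq_ell ltnn in lt_ell.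
by rewrite eq_uv eqxx in u_neq_v.
Qed.
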